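(* Let $\mathcal G=(\mathcal V,\mathcal E,W)$ be a network, $h\in\mathbb{R}^{\mathcal V}$, and consider the SNC game with binary actions on $\mathcal G$ with external field $h$, with set of Nash equilibria $\mathcal N$. Let $\mathcal V=\mathcal R\cup\mathcal S$, $\mathcal R\cap\mathcal S=\emptyset$, be a binary partition such that both $\mathcal G_{\mathcal R}$ and $\mathcal G_{\mathcal S}$ are structurally balanced. If there exists $\tau\in\{\pm1\}^{\mathcal R}$ such that $\tau_iW_{ij}\tau_j\ge0$ for all $i,j\in\mathcal R$ and $w_i^{\mathcal R}+\tau_ih_i\ge w_i^{\mathcal S}$ for all $i\in\mathcal R$, then there exists a Nash equilibrium $x^*\in\mathcal N$ with $x^*_{\mathcal R}=\tau$.
   Context: A network is a triple $\mathcal G=(\mathcal V,\mathcal E,W)$ where $\mathcal V$ is a finite nonempty set, $\mathcal E\subseteq\mathcal V\times\mathcal V$, and $W\in\mathbb{R}^{\mathcal V\times\mathcal V}$ has zero diagonal and satisfies $W_{ij}\neq0$ iff $(i,j)\in\mathcal E$ (weights may have either sign). For $\mathcal U\subseteq\mathcal V$, the subnetwork $\mathcal G_{\mathcal U}$ has node set $\mathcal U$, links $\mathcal E\cap(\mathcal U\times\mathcal U)$ and weight matrix $W_{\mathcal U\mathcal U}$. A network is structurally balanced if its node set can be written as a disjoint union of two sets with nonnegative weights on links within each set and nonpositive weights on links between the two sets. For $i\in\mathcal V$ and $\mathcal B\subseteq\mathcal V$, $w_i^{\mathcal B}=\sum_{j\in\mathcal B}|W_{ij}|$. The SNC game with binary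 actions on $\mathcal G$ with external field $h\in\mathbb{R}^{\mathcal V}$ has player set $\mathcal V$, action set $\{-1,+1\}$ for each player, strategy profiles $\mathcal X=\{\pm1\}^{\mathcal V}$, and utilities $u_i(x)=h_ix_i+x_i\sum_{j\in\mathcal V}W_{ij}x_j$. A Nash equilibrium is $x^*$ with $x^*_i\in\arg\max_{a\in\{\pm1\}}u_i(a,x^*_{-i})$ for all $i$. *)

From mathcomp Require Import all_boot all_order all_algebra.
Set Implicit Arguments. Unset Strict Implicit. Unset Printing Implicit Defensive.
Import Order.TTheory GRing.Theory Num.Theory.
Local Open Scope ring_scope.

Section SNC.
Variables (R : realFieldType) (V : finType).

(* A network on node set V is given by its weight matrix W : V -> V -> R with
   zero diagonal; the link set is the support {(i,j) | W i j != 0}. *)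
Definition zero_diag (W : V -> V -> R) : Prop := forall i, W i i = 0.

Definition struct_balanced (W : V -> V -> R) (U : {set V}) : Prop :=
  exists A : {set V}, A \subset U /\
    forall i j, i \in U -> j \in U ->
      if (i \in A) == (j \in A) then 0 <= W i j else W i j <= 0.

Definition wdeg (W : V -> V -> R) (i : V) (B : {set V}) : R :=
  \sum_(j in B) `|W i j|.

Definition is_pm1 (a : R) : Prop := a = 1 \/ a = -1.

Definition profile (x : V -> R) : Prop := forall i, is_pm1 (x i).

Definition utility (W : V -> V -> R) (h : V -> R) (i : V) (x : V -> R) : R :=
  h i * x i + x i * \sum_(j : V) W i j * x j.

Definition upd (x : V -> R) (i : V) (a : R) : V -> R :=
  fun j => if j == i then a else x j.

Definition nash_eq (W : V -> V -> R) (h : V -> R) (x : V -> R) : Prop :=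
  profile x /\
  forall i a, is_pm1 a -> utility W h i (upd x i a) <= utility W h i x.

End SNC.

From mathcomp Require Import all_boot all_order all_algebra.
From mathcomp Require Import lra.
Set Implicit Arguments. Unset Strict Implicit. Unset Printing Implicit Defensive.
Import Order.TTheory GRing.Theory Num.Theory.
Local Open Scope ring_scope.

(** Player [i] best-responds iff [x_i] has the sign of its local field
    [h_i + sum_j W_ij x_j].  On [R] the degree condition makes the sign of
    [tau_i] dominant whatever the other players do.  On the complement [S],
    the gauge [x_j -> sg_j x_j] given by structural balance turns [G_S] into
    a cooperative network, where raising one player's action raises every
    other gauged field.  Among the sets [P] of players of [S] that play [+sg]
    and want to, take one of maximal size: a player outside [P] who also
    wanted [+sg] could be added, so everyone in [S] best-responds. *)

Lemma normr_pm1 (R : realFieldType) (a : R) : is_pm1 a -> `|a| = 1.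
Proof. by case=> ->; rewrite ?normrN normr1. Qed.

Lemma pm1_mul_le (R : realFieldType) (a b F : R) :
  is_pm1 a -> is_pm1 b -> 0 <= b * F -> a * F <= b * F.
Proof. by case=> ->; case=> -> //; rewrite !mulN1r !mul1r; lra. Qed.

Section SNCGame.
Variables (R : realFieldType) (V : finType) (W : V -> V -> R) (h : V -> R).

Definition local_field (x : V -> R) (i : V) : R := h i + \sum_j W i j * x j.

Lemma utility_local_field x i : utility W h i x = x i * local_field x i.
Proof. by rewrite /utility /local_field mulrDr mulrC. Qed.

Lemma utility_upd x i a :
  zero_diag W -> utility W h i (upd x i a) = a * local_field x i.
Proof.
move=> W_diag; rewrite utility_local_field /upd eqxx /local_field.
congr (_ * (_ + _)); rewrite (bigD1 i) //= [RHS](bigD1 i) //= W_diag !mul0r.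
by congr (_ + _); apply: eq_bigr => j /negPf ->.
Qed.

Lemma nash_eq_local_field x : zero_diag W ->
  (forall i, is_pm1 (x i) /\ 0 <= x i * local_field x i) -> nash_eq W h x.
Proof.
move=> W_diag x_br; split=> [i | i a a_pm1]; first by case: (x_br i).
have [x_pm1 x_sign] := x_br i.
by rewrite utility_upd // utility_local_field; apply: pm1_mul_le.
Qed.

Lemma sum_pm1_ge_wdeg (B : {set V}) (x : V -> R) (s : R) i :
  is_pm1 s -> profile x -> - wdeg W i B <= \sum_(j in B) s * (W i j * x j).
Proof.
move=> s_pm1 x_pm1; rewrite /wdeg -sumrN; apply: ler_sum => j _; apply: lerNnormlW.
by rewrite !normrM (normr_pm1 s_pm1) (normr_pm1 (x_pm1 j)) mul1r mulr1.
Qed.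

Lemma sum_aligned_eq_wdeg (B : {set V}) (x : V -> R) i :
  profile x -> (forall j, j \in B -> 0 <= x i * W i j * x j) ->
  \sum_(j in B) x i * (W i j * x j) = wdeg W i B.
Proof.
move=> x_pm1 aligned; apply: eq_bigr => j jB.
rewrite mulrA -(ger0_norm (aligned j jB)) !normrM.
by rewrite (normr_pm1 (x_pm1 i)) (normr_pm1 (x_pm1 j)) mul1r mulr1.
Qed.

Lemma dominant_local_field (B : {set V}) (x : V -> R) i :
  profile x -> (forall j, j \in B -> 0 <= x i * W i j * x j) ->
  wdeg W i (~: B) <= wdeg W i B + x i * h i ->
  0 <= x i * local_field x i.
Proof.
move=> x_pm1 aligned deg.
rewrite /local_field mulrDr mulr_sumr (bigID (mem B)) /= sum_aligned_eq_wdeg //.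
have := sum_pm1_ge_wdeg (~: B) i (x_pm1 i) x_pm1.
under [X in _ <= X -> _]eq_bigl do rewrite in_setC.
lra.
Qed.

Lemma balanced_gauge (S : {set V}) : struct_balanced W S ->
  exists sg : V -> R, (forall j, is_pm1 (sg j)) /\
    forall i j, i \in S -> j \in S -> 0 <= sg i * W i j * sg j.
Proof.
case=> A [_ balanced]; exists (fun j => if j \in A then 1 else -1); split.
  by move=> j; case: ifP; [left | right].
move=> i j iS jS; have := balanced i j iS jS.
by case: (i \in A); case: (j \in A); rewrite /= ?mul1r ?mulr1 ?mulN1r ?mulrN1 ?opprK ?oppr_ge0.
Qed.

Section Cooperative.
Variables (S : {set V}) (sg y : V -> R).
Hypothesis sg_pm1 : forall j, is_pm1 (sg j).
Hypothesis sg_aligned : forall i j, i \in S -> j \in S -> 0 <= sg i * W i j * sg j.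

Definition gauged_profile (P : {set V}) (j : V) : R :=
  if j \in S then (if j \in P then sg j else - sg j) else y j.

Lemma gauged_profile_pm1 (P : {set V}) j : j \in S -> is_pm1 (gauged_profile P j).
Proof.
move=> jS; rewrite /gauged_profile jS.
by case: ifP; case: (sg_pm1 j) => ->; rewrite ?opprK; [left | right | right | left].
Qed.

Lemma local_field_mono (P P' : {set V}) i : P \subset P' -> i \in S ->
  sg i * local_field (gauged_profile P) i <= sg i * local_field (gauged_profile P') i.
Proof.
move=> sPP' iS; rewrite /local_field !mulrDr lerD2l !mulr_sumr.
apply: ler_sum => j _; rewrite /gauged_profile.
case: ifP => jS //; have := sg_aligned iS jS; rewrite !mulrA.
case: ifP => jP; first by rewrite (subsetP sPP' j jP).
by case: ifP => // _; rewrite mulrN -subr_ge0 opprK -mulr2n; apply: mulrn_wge0.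
Qed.

Definition upward (P : {set V}) : bool :=
  (P \subset S) && [forall i in P, 0 <= sg i * local_field (gauged_profile P) i].

Lemma exists_cooperative_equilibrium :
  exists x : V -> R, (forall j, j \notin S -> x j = y j) /\
    forall i, i \in S -> is_pm1 (x i) /\ 0 <= x i * local_field x i.
Proof.
have upward0 : upward set0.
  by rewrite /upward sub0set; apply/forall_inP => i; rewrite in_set0.
case: (arg_maxnP (fun P : {set V} => #|P|) upward0) => P /andP[sPS /forall_inP P_up] P_max.
exists (gauged_profile P); split=> [j /negPf jS | i iS].
  by rewrite /gauged_profile jS.
split; first exact: gauged_profile_pm1.
rewrite {1}/gauged_profile iS; case: ifPn => [/P_up // | iP].
rewrite mulNr oppr_ge0 leNgt; apply/negP => i_up.
have : upward (i |: P).
  apply/andP; split; first by rewrite subUset sub1set iS sPS.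
  apply/forall_inP => j; rewrite in_setU1 => /orP[/eqP -> | jP].
    exact: le_trans (ltW i_up) (local_field_mono (subsetUr _ _) iS).
  exact: le_trans (P_up j jP) (local_field_mono (subsetUr _ _) (subsetP sPS j jP)).
by move/P_max; rewrite cardsU1 iP add1n /= ltnn.
Qed.

End Cooperative.
End SNCGame.

Theorem corollary1 (R : realFieldType) (V : finType) (W : V -> V -> R)
    (h : V -> R) (Rs : {set V}) (tau : V -> R) :
  (0 < #|V|)%N ->
  zero_diag W ->
  struct_balanced W Rs ->
  struct_balanced W (~: Rs) ->
  (forall i, i \in Rs -> is_pm1 (tau i)) ->
  (forall i j, i \in Rs -> j \in Rs -> 0 <= tau i * W i j * tau j) ->
  (forall i, i \in Rs -> wdeg W i (~: Rs) <= wdeg W i Rs + tau i * h i) ->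
  exists x : V -> R, nash_eq W h x /\ (forall i, i \in Rs -> x i = tau i).
Proof.
move=> _ W_diag _ /balanced_gauge[sg [sg_pm1 sg_aligned]] tau_pm1 tau_aligned deg.
have [x [x_tau x_coop]] := exists_cooperative_equilibrium h tau sg_pm1 sg_aligned.
have {}x_tau i : i \in Rs -> x i = tau i by move=> iR; rewrite x_tau ?inE ?iR.
have {}x_coop i : i \notin Rs -> is_pm1 (x i) /\ 0 <= x i * local_field W h x i.
  by move=> iR; apply: x_coop; rewrite inE.
have x_pm1 : profile x.
  move=> i; case: (boolP (i \in Rs)) => iR; first by rewrite x_tau //; apply: tau_pm1.
  by case: (x_coop i iR).
exists x; split=> //; apply: nash_eq_local_field => // i; split=> //.
case: (boolP (i \in Rs)) => iR; last by case: (x_coop i iR).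
apply: (dominant_local_field (B := Rs)) => //; rewrite ?x_tau ?deg //.
by move=> j jR; rewrite !x_tau ?tau_aligned.
Qed.
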